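(* Let $1\le p\le2$ and let $x=(\xi_n)_{n\in\mathbb{Z}}\in\ell_p(\mathbb{Z})$. Then the closed linear span of $\{x^{(2n)}:n\in\mathbb{Z}\}$ is not equal to $\ell_p(\mathbb{Z})$.
   Context: For $x=(\xi_j)_{j\in\mathbb{Z}}$ and $n\in\mathbb{Z}$, $x^{(n)}=(\xi_{j-n})_{j\in\mathbb{Z}}$ is the shift of $x$ to the right by $n$. *)

From HB Require Import structures.
From mathcomp Require Import all_boot all_order all_algebra.
From mathcomp Require Import all_classical all_reals all_analysis.
Set Implicit Arguments. Unset Strict Implicit. Unset Printing Implicit Defensive.
Import Order.TTheory GRing.Theory Num.Theory.
Local Open Scope classical_set_scope.
Local Open Scope ring_scope.

Definition lp_sum (R : realType) (p : R) (y : int -> R) : \bar R :=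
  (\esum_(j in [set: int]) ((`|y j| `^ p)%:E))%E.

Definition lp_space (R : realType) (p : R) : set (int -> R) :=
  [set y | (lp_sum p y < +oo)%E].

Definition shift (R : realType) (x : int -> R) (n : int) : int -> R :=
  fun j => x (j - n).

Definition even_shift_span (R : realType) (x : int -> R) : set (int -> R) :=
  [set z | exists s : seq (R * int),
      z = fun j => \sum_(c <- s) c.1 * shift x (2 * c.2) j].

Definition closed_even_shift_span (R : realType) (p : R) (x : int -> R)
  : set (int -> R) :=
  [set y : int -> R | forall e : R, 0 < e ->
      exists2 z, even_shift_span x z & (lp_sum p (fun j : int => (y j - z j)%R) < e%:E)%E].

From Pilot Require Import Defs.
From HB Require Import structures.
From mathcomp Require Import all_boot all_order all_algebra.
From mathcomp Require Import all_classical all_reals all_analysis.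
From mathcomp Require Import ring lra zify.
Set Implicit Arguments. Unset Strict Implicit. Unset Printing Implicit Defensive.
Import Order.TTheory GRing.Theory Num.Theory.
Local Open Scope classical_set_scope.
Local Open Scope ring_scope.

(* The functional f |-> sum_j (-1)^j xi_(1-j) f_j annihilates every even shift x^(2n),
   because its terms at j and 2n + 1 - j cancel, and it takes the value +-xi_m on the
   unit sequence e_(1-m).  For p <= 2 the bound a b <= a^p / t + t^p b^p makes it small
   on sequences of small l_p size, so e_(1-m) stays away from the span when xi_m <> 0.
   To avoid convergence questions we only use the truncations phi_Q to |j| <= Q: on a
   shift x^(2n) the antisymmetry leaves only |2n + 1| terms at each end of the
   window, which are small once Q is large compared to the decay of x. *)

Definition delta_seq {R : pzSemiRingType} (q : int) : int -> R := fun j => (j == q)%:R.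

Section WindowSums.
Variable R : realFieldType.
Implicit Types (g : int -> R) (a c : int) (b : R).

Definition window_sum g a (n : nat) : R := \sum_(0 <= i < n) g (a + i%:Z).

Lemma window_sumD g a (m n : nat) :
  window_sum g a (m + n) = window_sum g a m + window_sum g (a + m%:Z) n.
Proof.
rewrite /window_sum (@big_cat_nat _ _ _ m) ?leq_addr //=.
congr (_ + _); rewrite -{1}[m]add0n big_addn addKn.
by apply: eq_bigr => i _; congr g; lia.
Qed.

Lemma window_sum_reflect g c a (n : nat) :
  window_sum (fun k => g (c - k)) a n = window_sum g (c - a - n%:Z + 1) n.
Proof.
rewrite /window_sum big_nat_rev; apply: eq_big_nat => i /andP[_ lt_in].
by congr g; lia.
Qed.

Lemma window_sum_le [g a] [n : nat] [b] :
  (forall i, (i < n)%N -> `|g (a + i%:Z)| <= b) -> `|window_sum g a n| <= n%:R * b.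
Proof.
move=> gb; apply: le_trans (ler_norm_sum _ _ _) _.
apply: le_trans (@ler_sum_nat _ 0 n _ (fun=> b) _) _.
  by move=> i /andP[_ lt_in]; exact: gb.
by rewrite sumr_const_nat subn0 mulr_natl.
Qed.

(* The window and its [d]-shift have opposite sums, so twice the sum is the difference
   of the two [d]-blocks at the ends. *)
Lemma window_sum_antishift_le g a (L d : nat) b :
  window_sum g a L = - window_sum g (a + d%:Z) L ->
  (forall i, (i < d)%N -> `|g (a + i%:Z)| <= b) ->
  (forall i, (i < d)%N -> `|g (a + L%:Z + i%:Z)| <= b) ->
  `|window_sum g a L| <= d%:R * b.
Proof.
move=> anti head tail.
have twice : 2 * window_sum g a L = window_sum g a d - window_sum g (a + L%:Z) d.
  have := window_sumD g a L d; rewrite addnC window_sumD; lra.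
have := ler_normB (window_sum g a d) (window_sum g (a + L%:Z) d).
rewrite -twice normrM ger0_norm //.
have := window_sum_le head; have := window_sum_le tail; lra.
Qed.

Lemma window_sum_antisym_le g c (Q K : nat) b :
  (forall k, g (c - k) = - g k) -> (forall k, (K < `|k|)%N -> `|g k| <= b) ->
  (K + `|c| <= Q)%N -> `|window_sum g (- Q%:Z) (2 * Q + 1)| <= `|c|%:R * b.
Proof.
move=> anti small le_Q.
have reflected : window_sum g (- Q%:Z) (2 * Q + 1) =
               - window_sum g (c - Q%:Z) (2 * Q + 1).
  have -> : c - Q%:Z = c - - Q%:Z - (2 * Q + 1)%N%:Z + 1 by lia.
  rewrite -window_sum_reflect /window_sum -sumrN; apply: eq_bigr => i _.
  by rewrite anti opprK.
have [c_ge0 | c_lt0] := leP 0 c.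
  apply: window_sum_antishift_le => [|i lt_id|i lt_id].
  - by rewrite reflected; congr (- window_sum _ _ _); lia.
  - by apply: small; lia.
  - by apply: small; lia.
rewrite reflected normrN; apply: window_sum_antishift_le => [|i lt_id|i lt_id].
- have -> : c - Q%:Z + (`|c|%N)%:Z = - Q%:Z by lia.
  by rewrite reflected opprK.
- by apply: small; lia.
- by apply: small; lia.
Qed.

Lemma window_sum_delta g a (n : nat) q : a <= q < a + n%:Z ->
  window_sum (fun k => g k * delta_seq q k) a n = g q.
Proof.
move=> /andP[le_aq lt_qn]; rewrite /window_sum.
have q_in : (`|q - a|%N \in index_iota 0 n) by rewrite mem_index_iota; lia.
rewrite (bigD1_seq _ q_in (iota_uniq _ _)) /= big1_seq => [|i /andP[ne_i _]].
  have -> : a + (`|q - a|%N)%:Z = q by lia.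
  by rewrite /delta_seq eqxx mulr1 addr0.
rewrite /delta_seq; case: eqP => [eq_i|_]; last by rewrite mulr0.
have {}eq_i : i = `|q - a|%N by lia.
by rewrite eq_i eqxx in ne_i.
Qed.

End WindowSums.

Lemma exprN1z_reflect (R : numFieldType) (n j : int) :
  (-1 : R) ^ (2 * n + 1 - j) = - (-1) ^ j.
Proof.
have N10 : (-1 : R) != 0 by rewrite oppr_eq0 oner_eq0.
rewrite expfzDr // -invr_expz [(-1) ^ j]expN1r invr_sign -expN1r expfzDr // expr1z.
by rewrite mulrN1 -exprz_exp [(-1) ^ 2]expN1r /= sqrrN expr1n exp1rz mulN1r.
Qed.

Section AlternatingPairing.
Variable R : realType.
Variable x : int -> R.

Definition alt_pairing (Q : nat) (f : int -> R) : R :=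
  window_sum (fun j => (-1) ^ j * x (1 - j) * f j) (- Q%:Z) (2 * Q + 1).

Lemma alt_pairingB Q f g :
  alt_pairing Q (fun j => f j - g j) = alt_pairing Q f - alt_pairing Q g.
Proof. by rewrite /alt_pairing /window_sum -sumrB; apply: eq_bigr => i _; ring. Qed.

Lemma alt_pairing_span Q (s : seq (R * int)) :
  alt_pairing Q (fun j => \sum_(c <- s) c.1 * Defs.shift x (2 * c.2) j)
  = \sum_(c <- s) c.1 * alt_pairing Q (Defs.shift x (2 * c.2)).
Proof.
rewrite /alt_pairing /window_sum.
under eq_bigr => i _ do rewrite mulr_sumr.
rewrite exchange_big /=; apply: eq_bigr => c _; rewrite mulr_sumr.
by apply: eq_bigr => i _; ring.
Qed.

Lemma alt_pairing_delta Q q : `|q| <= Q%:Z ->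
  alt_pairing Q (delta_seq q) = (-1) ^ q * x (1 - q).
Proof. by move=> le_qQ; rewrite /alt_pairing window_sum_delta //; lia. Qed.

(* The terms at [j] and [2n + 1 - j] cancel, so only the ends of the window survive. *)
Lemma alt_pairing_shift_le (Q K : nat) (n : int) (B eta : R) :
  (forall j, `|x j| <= B) -> (forall j, (K < `|j|)%N -> `|x j| <= eta) ->
  (K.+1 + `|(2 * n + 1)%R| <= Q)%N ->
  `|alt_pairing Q (Defs.shift x (2 * n))| <= (`|(2 * n + 1)%R|%N)%:R * (eta * B).
Proof.
move=> le_B tail le_Q; apply: (window_sum_antisym_le _ _ le_Q) => [k|k lt_k].
  rewrite exprN1z_reflect /Defs.shift.
  have -> : 1 - (2 * n + 1 - k) = k - 2 * n by ring.
  have -> : 2 * n + 1 - k - 2 * n = 1 - k by ring.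
  ring.
rewrite /Defs.shift !normrM expN1r normr_sign mul1r.
by apply: ler_pM; rewrite ?normr_ge0 //; apply: tail; lia.
Qed.

Lemma alt_pairing_span_le (Q K : nat) (s : seq (R * int)) (B eta : R) :
  (forall j, `|x j| <= B) -> (forall j, (K < `|j|)%N -> `|x j| <= eta) ->
  (K.+1 + \max_(c <- s) `|(2 * c.2 + 1)%R| <= Q)%N ->
  `|alt_pairing Q (fun j => \sum_(c <- s) c.1 * Defs.shift x (2 * c.2) j)|
    <= (\sum_(c <- s) `|c.1| * (`|(2 * c.2 + 1)%R|%N)%:R) * (eta * B).
Proof.
move=> le_B tail le_Q; rewrite alt_pairing_span mulr_suml.
apply: le_trans (ler_norm_sum _ _ _) _.
rewrite big_seq [X in _ <= X]big_seq; apply: ler_sum => c c_in.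
rewrite normrM -mulrA; apply: ler_wpM2l => //.
apply: alt_pairing_shift_le le_B tail _; apply: leq_trans le_Q.
by rewrite leq_add2l (@leq_bigmax_seq _ s xpredT (fun c : R * int => `|(2 * c.2 + 1)%R|%N)).
Qed.

End AlternatingPairing.

Section LpSums.
Variables (R : realType) (p : R).
Hypothesis p_ge1 : 1 <= p.
Implicit Types (y : int -> R) (a b : R).

Let p_gt0 : 0 < p. Proof. exact: lt_le_trans ltr01 p_ge1. Qed.

Lemma ler_powR2r a b : 0 <= a -> 0 <= b -> (a `^ p <= b `^ p) = (a <= b).
Proof.
move=> a_ge0 b_ge0; apply/idP/idP => [|le_ab].
  by apply: contraTT; rewrite -!ltNge; apply: gt0_ltr_powR; rewrite ?nnegrE.
by apply: ge0_ler_powR; rewrite ?nnegrE // ltW.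
Qed.

Lemma lp_sum_ge0 y : (0 <= lp_sum p y)%E.
Proof. by apply: esum_ge0 => i _; rewrite lee_fin powR_ge0. Qed.

Lemma lp_sum_fin_num y : (lp_sum p y < +oo)%E -> lp_sum p y \is a fin_num.
Proof. by rewrite ge0_fin_numE ?lp_sum_ge0. Qed.

Lemma lp_sum_seq_le y (s : seq int) : uniq s ->
  ((\sum_(m <- s) `|y m| `^ p)%:E <= lp_sum p y)%E.
Proof.
move=> s_uniq; apply: esum_ge; exists [set` s].
  by split; [exact: finite_seq|].
by rewrite -sumEFin fsbig_seq.
Qed.

Lemma lp_sum_delta q : lp_sum p (delta_seq q) = 1%E.
Proof.
rewrite /lp_sum (eq_esum (b := fun j => if j \in [set q] then 1%E else 0%E)).
  by rewrite -esum_mkcond esum_set1.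
move=> j _; rewrite /delta_seq; case: (eqVneq j q) => [->|ne_jq].
  by rewrite mem_set // normr1 powR1.
by rewrite memNset //= ?normr0 ?powR0 ?gt_eqF //; exact/eqP.
Qed.

Lemma window_sum_lp_le y (h : int -> int) (a : int) (n : nat) : injective h ->
  (lp_sum p y < +oo)%E ->
  window_sum (fun k => `|y (h k)| `^ p) a n <= fine (lp_sum p y).
Proof.
move=> h_inj y_fin.
have := lp_sum_seq_le y (s := map (fun i : nat => h (a + i%:Z)) (index_iota 0 n)).
rewrite map_inj_uniq ?iota_uniq => [|i j /h_inj]; last by lia.
by rewrite big_map -(fineK (lp_sum_fin_num y_fin)) lee_fin; apply.
Qed.

Lemma lp_term_le y j : (lp_sum p y < +oo)%E -> `|y j| `^ p <= fine (lp_sum p y).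
Proof.
move=> y_fin; have := lp_sum_seq_le y (s := [:: j]) isT.
by rewrite big_seq1 -(fineK (lp_sum_fin_num y_fin)) lee_fin.
Qed.

Lemma lp_norm_le y j : (lp_sum p y < +oo)%E -> `|y j| <= 1 + fine (lp_sum p y).
Proof.
move=> y_fin; have := lp_term_le j y_fin; have := powR_ge0 `|y j| p.
have [le_y1|lt_1y] := leP `|y j| 1; first lra.
have := le1r_powR (ltW lt_1y) p_ge1; lra.
Qed.

Lemma lp_tail_le y eta : (lp_sum p y < +oo)%E -> 0 < eta ->
  exists K : nat, forall m, (K < `|m|)%N -> `|y m| <= eta.
Proof.
move=> y_fin eta_gt0.
have y_fin_num := lp_sum_fin_num y_fin.
have : ((fine (lp_sum p y) - eta `^ p)%:E < lp_sum p y)%E.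
  by rewrite -(fineK y_fin_num) lte_fin gtrBl powR_gt0.
rewrite {2}/lp_sum /esum => /ereal_sup_gt [_ [X [finX _] <-]].
move: finX => /finite_seqP [s ->].
rewrite (_ : [set` s] = [set` undup s]); last first.
  by apply/seteqP; split => i /=; rewrite mem_undup.
rewrite -fsbig_seq ?undup_uniq // sumEFin lte_fin => big_partial.
exists (\max_(i <- s) `|i|%N) => m lt_m.
have m_notin : m \notin undup s.
  rewrite mem_undup; apply: contraTN lt_m => m_in.
  by rewrite -leqNgt (@leq_bigmax_seq _ s xpredT (fun i : int => `|i|%N) m).
have := lp_sum_seq_le y (s := m :: undup s).
rewrite /= m_notin undup_uniq big_cons -(fineK y_fin_num) lee_fin => /(_ isT) le_sum.
rewrite -(ler_powR2r (normr_ge0 _) (ltW eta_gt0)); lra.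
Qed.

Hypothesis p_le2 : p <= 2.

(* [u v <= max(u, v)^2 <= max(u, v)^p] on the unit square: this is where [p <= 2] enters. *)
Lemma mulr_le_powRD a b : 0 <= a <= 1 -> 0 <= b <= 1 -> a * b <= a `^ p + b `^ p.
Proof.
have sqr_le w : 0 <= w <= 1 -> w * w <= w `^ p.
  move=> /andP[w_ge0 w_le1]; have [->|w_neq0] := eqVneq w 0.
    by rewrite mul0r powR_ge0.
  rewrite -expr2 -powR_mulrn //; apply: ger_powR => //.
  by rewrite lt_def w_neq0 w_ge0 w_le1.
wlog le_ab : a b / a <= b => [hwlog a01 b01|].
  have [le_ab|lt_ba] := leP a b; first exact: hwlog.
  by rewrite mulrC addrC; apply: hwlog => //; exact: ltW.
move=> /andP[a_ge0 _] b01; have := sqr_le b b01; have := powR_ge0 a p.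
have : a * b <= b * b by rewrite ler_wpM2r //; case/andP: b01.
lra.
Qed.

(* Write [a b = (a / t) (t b)]; then [(a / t)^p <= a^p / t] as [t <= t^p]. *)
Lemma mulr_le_powR_scaled a b t : 1 <= t -> 0 <= a <= t -> 0 <= b -> t * b <= 1 ->
  a * b <= a `^ p / t + t `^ p * b `^ p.
Proof.
move=> t_ge1 /andP[a_ge0 a_le_t] b_ge0 tb_le1.
have t_gt0 : 0 < t by lra.
have t_ge0 : 0 <= t by lra.
have -> : a * b = (a / t) * (t * b) by field; rewrite gt_eqF.
have at01 : 0 <= a / t <= 1 by rewrite divr_ge0 ?ler_pdivrMr ?mul1r.
have tb01 : 0 <= t * b <= 1 by rewrite tb_le1 mulr_ge0.
apply: le_trans (mulr_le_powRD at01 tb01) _.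
rewrite [(t * b) `^ p]powRM // lerD2r ler_pdivlMr //.
have a_eq : a = a / t * t by rewrite divfK // gt_eqF.
rewrite {2}a_eq [X in _ <= X]powRM ?divr_ge0 //.
by apply: ler_wpM2l; [exact: powR_ge0 | exact: le1r_powR].
Qed.

Lemma alt_pairing_lp_le x f (Q : nat) t :
  (lp_sum p x < +oo)%E -> (lp_sum p f < +oo)%E -> 1 <= t ->
  (forall j, `|x j| <= t) -> (forall j, t * `|f j| <= 1) ->
  `|alt_pairing x Q f| <= fine (lp_sum p x) / t + t `^ p * fine (lp_sum p f).
Proof.
move=> x_fin f_fin t_ge1 le_x le_f.
have x_window := window_sum_lp_le (h := fun j => 1 - j) (- Q%:Z) (2 * Q + 1)
  (can_inj (fun j => subKr 1 j)) x_fin.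
have f_window := window_sum_lp_le (h := id) (- Q%:Z) (2 * Q + 1) (@inj_id _) f_fin.
apply: le_trans (ler_norm_sum _ _ _) _.
apply: le_trans (_ : window_sum (fun j => `|x (1 - j)| `^ p / t + t `^ p * `|f j| `^ p)
                       (- Q%:Z) (2 * Q + 1) <= _).
  apply: ler_sum => i _; rewrite !normrM expN1r normr_sign mul1r.
  by apply: mulr_le_powR_scaled; rewrite ?normr_ge0 ?le_x ?le_f.
rewrite /window_sum big_split /= -mulr_suml -mulr_sumr.
apply: lerD; first by apply: ler_wpM2r; rewrite ?invr_ge0 //; lra.
by apply: ler_wpM2l; rewrite ?powR_ge0.
Qed.

Lemma alt_pairing_near0 x c : (lp_sum p x < +oo)%E -> 0 < c ->
  exists2 e, 0 < e & forall f Q, (lp_sum p f < e%:E)%E -> `|alt_pairing x Q f| < c.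
Proof.
move=> x_fin c_gt0; set A := fine (lp_sum p x).
have A_ge0 : 0 <= A by apply: fine_ge0; exact: lp_sum_ge0.
have A_c_ge0 : 0 <= 2 * A / c by rewrite divr_ge0 ?mulr_ge0 // ltW.
set t := 1 + A + 2 * A / c.
have t_ge1 : 1 <= t by rewrite /t; lra.
have A_t : A / t <= c / 2.
  rewrite ler_pdivrMr ?(lt_le_trans ltr01) // /t mulrDr mulrCA.
  have -> : c / 2 / c = 2^-1 by rewrite mulrAC divff ?gt_eqF ?mul1r.
  by have := mulr_ge0 (ltW c_gt0) A_ge0; lra.
have tp_gt0 : 0 < t `^ p by rewrite powR_gt0 // (lt_le_trans ltr01).
have min_gt0 : 0 < Num.min 1 (c / 2) by rewrite lt_min ltr01 divr_gt0.
exists (Num.min 1 (c / 2) / t `^ p) => [|f Q f_small]; first exact: divr_gt0.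
have f_fin : (lp_sum p f < +oo)%E by apply: lt_trans f_small (ltry _).
have tp_f : t `^ p * fine (lp_sum p f) < Num.min 1 (c / 2).
  by rewrite mulrC -ltr_pdivlMr // -lte_fin fineK ?lp_sum_fin_num.
have t_ge0 : 0 <= t by apply: le_trans t_ge1.
have le_f j : t * `|f j| <= 1.
  rewrite -(ler_powR2r (mulr_ge0 _ _)) // powR1 powRM //.
  have := ler_wpM2l (ltW tp_gt0) (lp_term_le j f_fin).
  by have := ge_min 1 1 (c / 2); rewrite lexx /=; lra.
have le_x k : `|x k| <= t.
  by have := lp_norm_le k x_fin; rewrite -/A /t; lra.
have := alt_pairing_lp_le Q x_fin f_fin t_ge1 le_x le_f.
by rewrite -/A; have := ge_min (c / 2) 1 (c / 2); rewrite lexx orbT; lra.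
Qed.

End LpSums.

Lemma closed_even_shift_span0 (R : realType) (p : R) (x : int -> R) (q : int) :
  1 <= p -> (forall j, x j = 0) -> ~ closed_even_shift_span p x (delta_seq q).
Proof.
move=> p_ge1 x0 /(_ 1 ltr01) [z [s ->]].
have -> : (fun j => delta_seq q j - \sum_(c <- s) c.1 * Defs.shift x (2 * c.2) j)
          = delta_seq q.
  by apply: funext => j; rewrite big1 ?subr0 // => c _; rewrite /Defs.shift x0 mulr0.
by rewrite lp_sum_delta // ltxx.
Qed.

Lemma delta_notin_closed_even_shift_span (R : realType) (p : R) (x : int -> R) m :
  1 <= p <= 2 -> (lp_sum p x < +oo)%E -> x m != 0 ->
  ~ closed_even_shift_span p x (delta_seq (1 - m)).
Proof.
move=> /andP[p_ge1 p_le2] x_fin xm_neq0 approx.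
set c0 := `|x m|; have c0_gt0 : 0 < c0 by rewrite normr_gt0.
have c0_half_gt0 : 0 < c0 / 2 by rewrite divr_gt0.
have [e e_gt0 near0] := alt_pairing_near0 p_ge1 p_le2 x_fin c0_half_gt0.
have [z [s z_def] approx_z] := approx e e_gt0.
set M := \sum_(c <- s) `|c.1| * (`|(2 * c.2 + 1)%R|%N)%:R.
have M_ge0 : 0 <= M by apply: sumr_ge0 => c _; apply: mulr_ge0.
set B := 1 + fine (lp_sum p x).
have B_gt0 : 0 < B by have := fine_ge0 (lp_sum_ge0 p x); rewrite /B; lra.
set eta := c0 / (4 * B * (M + 1)).
have eta_gt0 : 0 < eta by rewrite divr_gt0 // !mulr_gt0 //; lra.
have [K tail] := lp_tail_le p_ge1 x_fin eta_gt0.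
set Q := (K.+1 + \max_(c <- s) `|(2 * c.2 + 1)%R| + `|1 - m|)%N.
have pair_z : `|alt_pairing x Q z| <= c0 / 4.
  have le_B j : `|x j| <= B := lp_norm_le p_ge1 j x_fin.
  rewrite z_def; apply: le_trans (alt_pairing_span_le le_B tail _) _; first exact: leq_addr.
  have -> : c0 / 4 = (M + 1) * (eta * B) by rewrite /eta; field; lra.
  by apply: ler_wpM2r; [exact: mulr_ge0 (ltW eta_gt0) (ltW B_gt0) | rewrite -/M; lra].
have pair_delta : `|alt_pairing x Q (delta_seq (1 - m))| = c0.
  rewrite alt_pairing_delta ?normrM ?expN1r ?normr_sign ?mul1r ?subKr //; lia.
have := near0 _ Q approx_z; rewrite alt_pairingB => pair_d.
have := ler_normD (alt_pairing x Q (delta_seq (1 - m)) - alt_pairing x Q z)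
                  (alt_pairing x Q z).
rewrite subrK pair_delta; lra.
Qed.

Theorem lemma3p11 (R : realType) (p : R) (x : int -> R) :
  1 <= p <= 2 -> x \in lp_space p ->
  closed_even_shift_span p x <> lp_space p.
Proof.
move=> p12 x_lp span_eq; have /andP[p_ge1 _] := p12.
have x_fin : (lp_sum p x < +oo)%E by rewrite inE in x_lp.
have delta_in q : closed_even_shift_span p x (delta_seq q).
  by rewrite span_eq /lp_space /= lp_sum_delta // ltry.
have [[m xm_neq0] | x_eq0] := pselect (exists m, x m != 0).
  exact: delta_notin_closed_even_shift_span p12 x_fin xm_neq0 (delta_in (1 - m)).
apply: (closed_even_shift_span0 p_ge1 _ (delta_in 0)) => j.
by apply/eqP; apply: contra_notT x_eq0 => xj_neq0; exists j.
Qed.
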